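(* Suppose the kernel $k$ satisfies $\int_\mathcal{G}k(gx,x')\,d\lambda(g)=\int_\mathcal{G}k(x,gx')\,d\lambda(g)$ for all $x,x'\in\mathcal{X}$. Let $\overline{\mathcal{H}}=\{f\in\mathcal{H}:f\text{ is }\mathcal{G}\text{-invariant}\}$ and $\mathcal{H}_\perp=\{f\in\mathcal{H}:\mathcal{O}f=0\}$, where $\mathcal{O}f(x)=\int_\mathcal{G}f(gx)\,d\lambda(g)$. Then $\mathcal{O}$ maps $\mathcal{H}$ into $\mathcal{H}$, and: - $\mathcal{H}$ admits the orthogonal decomposition $\mathcal{H}=\overline{\mathcal{H}}\oplus\mathcal{H}_\perp$ (orthogonality with respect to $\langle\cdot,\cdot\rangle_\mathcal{H}$); - $\overline{\mathcal{H}}$ is an RKHS with kernel $\bar k(x,y)=\int_\mathcal{G}k(x,gy)\,d\lambda(g)$; - $\mathcal{H}_\perp$ is an RKHS with kernel $k^\perp(x,y)=k(x,y)-\bar k(x,y)$.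
   Context: $\mathcal{G}$ is a compact, second countable, Hausdorff topological group with Haar probability measure $\lambda$, acting measurably on a nonempty Polish space $\mathcal{X}$; $\mu$ is a $\mathcal{G}$-invariant Borel probability measure on $\mathcal{X}$ with $\mathrm{supp}\,\mu=\mathcal{X}$. $k:\mathcal{X}\times\mathcal{X}\to\mathbb{R}$ is a measurable symmetric positive definite kernel with RKHS $\mathcal{H}$ (inner product $\langle\cdot,\cdot\rangle_\mathcal{H}$), such that $k(\cdot,x)$ is continuous for all $x$ and $\sup_xk(x,x)<\infty$. $f$ is $\mathcal{G}$-invariant if $f(gx)=f(x)$ for all $g,x$. *)

From HB Require Import structures.
From mathcomp Require Import all_boot all_order all_algebra.
From mathcomp Require Import all_classical all_reals all_analysis.

Set Implicit Arguments.
Unset Strict Implicit.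
Unset Printing Implicit Defensive.

Import Order.TTheory GRing.Theory Num.Theory.
Import numFieldNormedType.Exports.

Local Open Scope classical_set_scope.
Local Open Scope ring_scope.

Definition borelT (T : ptopologicalType) := g_sigma_algebraType (@open T).

Definition topological_group (G : ptopologicalType)
  (mul : G -> G -> G) (inv : G -> G) (e : G) : Prop :=
  [/\ (forall a b c, mul a (mul b c) = mul (mul a b) c),
      (forall a, mul e a = a /\ mul a e = a),
      (forall a, mul (inv a) a = e /\ mul a (inv a) = e),
      continuous (fun p : G * G => mul p.1 p.2) &
      continuous inv ].

Definition haar_probability (R : realType) (G : ptopologicalType)
  (mul : G -> G -> G) (lam : probability (borelT G) R) : Prop :=
  forall (g : G) (A : set (borelT G)), measurable A ->
    lam ((mul g) @` A) = lam A.

Definition polish (R : realType) (T : ptopologicalType) : Prop :=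
  (exists d : T -> T -> R,
    [/\ (forall x y, 0 <= d x y),
        (forall x y, d x y = 0 <-> x = y),
        (forall x y, d x y = d y x),
        (forall x y z, d x z <= d x y + d y z) /\
        (forall U : set T, open U <->
           (forall x, U x -> exists2 r : R, 0 < r & [set y | d x y < r] `<=` U)) &
        (forall u : nat -> T,
           (forall eps : R, 0 < eps -> exists N, forall m n, (N <= m)%N -> (N <= n)%N ->
              d (u m) (u n) < eps) ->
           exists l : T, forall eps : R, 0 < eps -> exists N, forall n, (N <= n)%N ->
              d (u n) l < eps) ]) /\
  (exists2 D : set T, countable D & dense D).

Definition measurable_action (G X : ptopologicalType) (mul : G -> G -> G) (e : G)
  (act : G -> X -> X) : Prop :=
  [/\ (forall x, act e x = x),
      (forall g h x, act (mul g h) x = act g (act h x)) &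
      measurable_fun [set: (borelT G * borelT X)%type]
        (fun p : (borelT G * borelT X)%type => (act p.1 p.2 : borelT X)) ].

Definition msupport (R : realType) (X : ptopologicalType)
  (mu : probability (borelT X) R) : set X :=
  [set x | forall U : set X, open U -> U x -> (0 < mu U)%E].

Definition pd_kernel (R : realType) (X : Type) (k : X -> X -> R) : Prop :=
  (forall x y, k x y = k y x) /\
  (forall (n : nat) (xs : 'I_n -> X) (c : 'I_n -> R),
     0 <= \sum_(i < n) \sum_(j < n) c i * c j * k (xs i) (xs j)).

Definition is_rkhs (R : realType) (X : Type) (H : set (X -> R))
  (ip : (X -> R) -> (X -> R) -> R) (k : X -> X -> R) : Prop :=
  let nrm := fun f : X -> R => Num.sqrt (ip f f) in
  [/\
      H (fun _ => 0) /\
      (forall f g, H f -> H g -> H (fun x => f x + g x)) /\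
      (forall (a : R) f, H f -> H (fun x => a * f x)),
      (forall f g, H f -> H g -> ip f g = ip g f) /\
      (forall f g h, H f -> H g -> H h -> ip (fun x => f x + g x) h = ip f h + ip g h) /\
      (forall (a : R) f g, H f -> H g -> ip (fun x => a * f x) g = a * ip f g) /\
      (forall f, H f -> 0 <= ip f f) /\
      (forall f, H f -> ip f f = 0 -> f = (fun _ => 0)),
      (forall u : nat -> X -> R, (forall n, H (u n)) ->
         (forall eps : R, 0 < eps -> exists N, forall m n, (N <= m)%N -> (N <= n)%N ->
            nrm (fun x => u m x - u n x) < eps) ->
         exists2 f, H f & forall eps : R, 0 < eps -> exists N, forall n, (N <= n)%N ->
            nrm (fun x => u n x - f x) < eps),
      (forall x, H (fun y => k y x)) &
      (forall f x, H f -> ip f (fun y => k y x) = f x) ].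

Definition avg_op (R : realType) (G X : ptopologicalType)
  (lam : probability (borelT G) R) (act : G -> X -> X) (f : X -> R) : X -> R :=
  fun x => Rintegral lam [set: borelT G] (fun g : borelT G => f (act g x)).

Definition kbar (R : realType) (G X : ptopologicalType)
  (lam : probability (borelT G) R) (act : G -> X -> X) (k : X -> X -> R) :
  X -> X -> R :=
  fun x y => Rintegral lam [set: borelT G] (fun g : borelT G => k x (act g y)).

Definition G_invariant (G X : Type) (act : G -> X -> X) (R : Type) (f : X -> R) :=
  forall g x, f (act g x) = f x.

(* The averaging operator O is the orthogonal projection of H onto the closed
   subspace of G-invariant functions.  As the Haar measure is a probability and
   k is bounded on the diagonal, f |-> O f y is a bounded linear functional; by
   the reproducing property and the symmetry of k its Riesz representer is
   kbar(., y).  Left invariance and Fubini make the Haar probability right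
   invariant along orbits, which with the symmetry hypothesis on k makes
   kbar(., y) invariant.  So for the projection p of f onto the invariant
   functions, O f y = <f, kbar(., y)> = <p, kbar(., y)> = O p y = p y.  The
   invariant functions and the kernel of O are then closed subspaces in which
   kbar and k - kbar reproduce. *)

From HB Require Import structures.
From mathcomp Require Import all_boot all_order all_algebra.
From mathcomp Require Import all_classical all_reals all_analysis.
From mathcomp Require Import ring lra measurable_realfun.

Set Implicit Arguments.
Unset Strict Implicit.
Unset Printing Implicit Defensive.

Import Order.TTheory GRing.Theory Num.Theory.
Import numFieldNormedType.Exports.

Local Open Scope classical_set_scope.
Local Open Scope ring_scope.

Lemma eventually_invS_lt (R : realType) (d : R) : 0 < d ->
  exists N, forall n, (N <= n)%N -> n.+1%:R^-1 < d.
Proof.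
move=> d_gt0; exists (Num.Def.archi_bound d^-1) => n hn.
rewrite -[d]invrK ltf_pV2 ?posrE ?invr_gt0 ?ltr0Sn //.
apply: (lt_le_trans (archi_boundP _)); first by rewrite invr_ge0 ltW.
by rewrite ler_nat; apply: leq_trans hn _.
Qed.

Definition hnorm (R : realType) (X : Type) (ip : (X -> R) -> (X -> R) -> R)
    (f : X -> R) : R :=
  Num.sqrt (ip f f).

Definition hcvg (R : realType) (X : Type) (ip : (X -> R) -> (X -> R) -> R)
    (u : nat -> X -> R) (f : X -> R) :=
  forall eps : R, 0 < eps ->
    exists N, forall n, (N <= n)%N -> hnorm ip (u n - f) < eps.

Definition hcauchy (R : realType) (X : Type) (ip : (X -> R) -> (X -> R) -> R)
    (u : nat -> X -> R) :=
  forall eps : R, 0 < eps -> exists N, forall m n,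
    (N <= m)%N -> (N <= n)%N -> hnorm ip (u m - u n) < eps.

Record hilbert_space (R : realType) (X : Type) (H : set (X -> R))
    (ip : (X -> R) -> (X -> R) -> R) : Prop := HilbertSpace {
  hilbert0 : H 0;
  hilbertD : forall f g, H f -> H g -> H (f + g);
  hilbertZ : forall (a : R) f, H f -> H (a *: f);
  ipC : forall f g, H f -> H g -> ip f g = ip g f;
  ipDl : forall f g h, H f -> H g -> H h -> ip (f + g) h = ip f h + ip g h;
  ipZl : forall (a : R) f g, H f -> H g -> ip (a *: f) g = a * ip f g;
  ip_ge0 : forall f, H f -> 0 <= ip f f;
  ip_eq0 : forall f, H f -> ip f f = 0 -> f = 0;
  hilbert_complete : forall u, (forall n, H (u n)) -> hcauchy ip u ->
    exists2 f, H f & hcvg ip u f }.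

Lemma hilbertN (R : realType) (X : Type) (H : set (X -> R)) ip :
  hilbert_space H ip -> forall f, H f -> H (- f).
Proof. by move=> hH f hf; rewrite -scaleN1r; exact: (hilbertZ hH). Qed.

Lemma hilbertB (R : realType) (X : Type) (H : set (X -> R)) ip :
  hilbert_space H ip -> forall f g, H f -> H g -> H (f - g).
Proof. by move=> hH f g hf hg; apply: (hilbertD hH) => //; exact: (hilbertN hH). Qed.

Lemma rkhs_hilbert_space (R : realType) (X : Type) (H : set (X -> R)) ip k :
  is_rkhs H ip k -> hilbert_space H ip.
Proof. by case=> -[? [? ?]] [? [? [? [? ?]]]] ? _ _; split. Qed.

Create HintDb hilbert.

Section Hilbert.
Variables (R : realType) (X : Type) (H : set (X -> R))
  (ip : (X -> R) -> (X -> R) -> R).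
Hypothesis hH : hilbert_space H ip.
Let mem0 := hilbert0 hH.
Let memD := hilbertD hH.
Let memZ := hilbertZ hH.
Let memN := hilbertN hH.
Let memB := hilbertB hH.
Local Hint Resolve mem0 memD memZ memN memB : hilbert.
(* Lets [//] discharge membership side conditions such as [H (f - a *: g)]. *)
Local Hint Extern 0 (H _) => solve [auto with nocore hilbert] : core.
Local Notation hnorm := (hnorm ip).

Lemma ipZr a f g : H f -> H g -> ip f (a *: g) = a * ip f g.
Proof. by move=> hf hg; rewrite (ipC hH) // (ipZl hH) // (ipC hH). Qed.

Lemma ipDr f g h : H f -> H g -> H h -> ip f (g + h) = ip f g + ip f h.
Proof.
move=> hf hg hh.
by rewrite (ipC hH) // (ipDl hH) // (ipC hH hg hf) (ipC hH hh hf).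
Qed.

Lemma ipNl f g : H f -> H g -> ip (- f) g = - ip f g.
Proof. by move=> hf hg; rewrite -scaleN1r (ipZl hH) // mulN1r. Qed.

Lemma ipNr f g : H f -> H g -> ip f (- g) = - ip f g.
Proof. by move=> hf hg; rewrite -scaleN1r ipZr // mulN1r. Qed.

Lemma ipBl f g h : H f -> H g -> H h -> ip (f - g) h = ip f h - ip g h.
Proof. by move=> hf hg hh; rewrite (ipDl hH) // ipNl. Qed.

Lemma ipBr f g h : H f -> H g -> H h -> ip f (g - h) = ip f g - ip f h.
Proof. by move=> hf hg hh; rewrite ipDr // ipNr. Qed.

Lemma ip0l f : H f -> ip 0 f = 0.
Proof. by move=> hf; rewrite -(scale0r f) (ipZl hH) // mul0r. Qed.

Lemma ip0r f : H f -> ip f 0 = 0.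
Proof. by move=> hf; rewrite (ipC hH) // ip0l. Qed.

Lemma ip_sqrD f g : H f -> H g ->
  ip (f + g) (f + g) = ip f f + 2 * ip f g + ip g g.
Proof.
by move=> hf hg; rewrite (ipDl hH) // !ipDr // (ipC hH hg hf); ring.
Qed.

Lemma ip_sqrB f g : H f -> H g ->
  ip (f - g) (f - g) = ip f f - 2 * ip f g + ip g g.
Proof. by move=> hf hg; rewrite ip_sqrD // ipNr // ipNl // ipNr //; ring. Qed.

Lemma hnorm_ge0 f : 0 <= hnorm f.
Proof. exact: sqrtr_ge0. Qed.

Lemma hnorm_lt f eps : 0 < eps -> (hnorm f < eps) = (ip f f < eps ^+ 2).
Proof.
by move=> eps0; rewrite -[RHS]ltr_sqrt ?exprn_gt0 // sqrtr_sqr gtr0_norm.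
Qed.

Lemma cauchy_schwarz f g : H f -> H g -> ip f g ^+ 2 <= ip f f * ip g g.
Proof.
move=> hf hg; have [gg0|gg_neq0] := eqVneq (ip g g) 0.
  by rewrite gg0 mulr0 (ip_eq0 hH hg gg0) ip0r // expr0n.
have gg_gt0 : 0 < ip g g by rewrite lt_neqAle eq_sym gg_neq0 (ip_ge0 hH).
have := ip_ge0 hH (memB (memZ (ip g g) hf) (memZ (ip f g) hg)).
rewrite ip_sqrB // !(ipZl hH) // !ipZr //.
have -> : ip g g * (ip g g * ip f f) - 2 * (ip g g * (ip f g * ip f g))
    + ip f g * (ip f g * ip g g) = ip g g * (ip f f * ip g g - ip f g ^+ 2).
  by ring.
by rewrite pmulr_rge0 // subr_ge0.
Qed.

Lemma normr_ip_le f g : H f -> H g -> `|ip f g| <= hnorm f * hnorm g.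
Proof.
move=> hf hg; rewrite -sqrtrM ?(ip_ge0 hH) // -sqrtr_sqr.
by apply: ler_wsqrtr; exact: cauchy_schwarz.
Qed.

Lemma almost_minimizer_ip h t eta : H h -> H t ->
  (forall tau, ip h h <= ip (h - tau *: t) (h - tau *: t) + eta) ->
  ip h t ^+ 2 <= eta * (ip t t + 1).
Proof.
move=> hh ht hmin; have tt_ge0 := ip_ge0 hH ht.
have [tau htau] : exists tau, ip h t = tau * (ip t t + 1).
  by exists (ip h t / (ip t t + 1)); rewrite divfK // gt_eqF //; lra.
have := hmin tau; rewrite ip_sqrB // ipZr // (ipZl hH) // ipZr // htau.
by clear htau; nra.
Qed.

Definition bounded_linear (phi : (X -> R) -> R) :=
  (forall a f g, H f -> H g -> phi (a *: f + g) = a * phi f + phi g) /\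
  exists C, forall f, H f -> `|phi f| <= C * hnorm f.

Lemma bounded_linearB phi f g : bounded_linear phi -> H f -> H g ->
  phi (f - g) = phi f - phi g.
Proof.
case=> lin _ hf hg; have -> : f - g = (-1) *: g + f by rewrite scaleN1r addrC.
by rewrite lin // mulN1r addrC.
Qed.

Lemma bounded_linear0 phi : bounded_linear phi -> phi 0 = 0.
Proof. by move=> hphi; rewrite -(subrr (0 : X -> R)) bounded_linearB // subrr. Qed.

Lemma bounded_linearZ phi a f : bounded_linear phi -> H f ->
  phi (a *: f) = a * phi f.
Proof.
by move=> hphi hf; rewrite -[a *: f]addr0 hphi.1 // bounded_linear0 // addr0.
Qed.

Lemma bounded_linear_sub phi psi : bounded_linear phi -> bounded_linear psi ->
  bounded_linear (fun f => phi f - psi f).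
Proof.
move=> [phiL [C1 hC1]] [psiL [C2 hC2]]; split.
  by move=> a f g hf hg; rewrite phiL // psiL //; ring.
exists (C1 + C2) => f hf; rewrite mulrDl.
by apply: le_trans (ler_normB _ _) _; exact: lerD (hC1 _ hf) (hC2 _ hf).
Qed.

Lemma bounded_linear_cvg phi u f : bounded_linear phi ->
  (forall n, H (u n)) -> H f -> hcvg ip u f -> phi (u n) @[n --> \oo] --> phi f.
Proof.
move=> hphi hu hf cv; have [_ [C hC]] := hphi.
apply/cvgrPdist_lt => eps eps_gt0.
have C1_gt0 : 0 < `|C| + 1 by rewrite ltr_pwDr.
have [N hN] := cv (eps / (`|C| + 1)) (divr_gt0 eps_gt0 C1_gt0).
exists N => // n /= /hN hn.
rewrite distrC -bounded_linearB //; apply: le_lt_trans (hC _ _) _ => //.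
apply: le_lt_trans (_ : _ <= hnorm (u n - f) * (`|C| + 1)) _.
  by rewrite [leRHS]mulrC ler_wpM2r ?hnorm_ge0 // (le_trans (ler_norm C)) // lerDl.
by rewrite -ltr_pdivlMr.
Qed.

Definition closed_subspace (S : set (X -> R)) :=
  [/\ S `<=` H, S 0, (forall a f g, S f -> S g -> S (a *: f + g)) &
      forall u f, (forall n, S (u n)) -> H f -> hcvg ip u f -> S f].

Lemma closed_subspaceZ S a f : closed_subspace S -> S f -> S (a *: f).
Proof. by case=> _ S0 SL _ Sf; rewrite -[a *: f]addr0; exact: SL. Qed.

Lemma closed_subspaceD S f g : closed_subspace S -> S f -> S g -> S (f + g).
Proof. by case=> _ _ SL _ Sf Sg; rewrite -[f]scale1r; exact: SL. Qed.

Lemma closed_subspace_kernel (I : Type) (phi : I -> (X -> R) -> R) :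
  (forall i, bounded_linear (phi i)) ->
  closed_subspace [set f | H f /\ forall i, phi i f = 0].
Proof.
move=> hphi; split.
- by move=> f [].
- by split => // i; exact: bounded_linear0.
- move=> a f g [hf f0] [hg g0]; split => // i.
  by rewrite (hphi i).1 // f0 g0 mulr0 addr0.
- move=> u f hu hf cv; split => // i.
  have := bounded_linear_cvg (hphi i) (fun n => (hu n).1) hf cv.
  rewrite (_ : (fun n => phi i (u n)) = cst 0); last first.
    by apply/funext => n; exact: (hu n).2.
  by move/(cvg_lim (@Rhausdorff R)) <-; rewrite lim_cst.
Qed.

Lemma ip_parallelogram f g : H f -> H g ->
  ip (f - g) (f - g) + ip (f + g) (f + g) = 2 * ip f f + 2 * ip g g.
Proof. by move=> hf hg; rewrite ip_sqrB // ip_sqrD //; ring. Qed.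

Lemma almost_minimizing_sequence S f : closed_subspace S -> H f ->
  exists2 s : nat -> X -> R, forall n, S (s n) &
    forall n t, S t -> ip (f - s n) (f - s n) < ip (f - t) (f - t) + n.+1%:R^-1.
Proof.
case=> SH S0 _ _ hf.
pose D := [set ip (f - t) (f - t) | t in S].
have hD : has_inf D.
  split; first by exists (ip (f - 0) (f - 0)), 0.
  by exists 0 => _ [t St <-]; apply: (ip_ge0 hH); have := SH _ St; auto.
have /choice[s hs] n : exists s, S s /\ ip (f - s) (f - s) < inf D + n.+1%:R^-1.
  have invSn_gt0 : 0 < n.+1%:R^-1 :> R by rewrite invr_gt0.
  by have [_ [s Ss <-] hs] := inf_adherent invSn_gt0 hD; exists s.
exists s => [n|n t St]; first exact: (hs n).1.
by apply: lt_le_trans (hs n).2 _; rewrite lerD2r; apply: (ge_inf hD.2); exists t.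
Qed.

Lemma almost_minimizing_cauchy S f s : closed_subspace S -> H f ->
  (forall n, S (s n)) ->
  (forall n t, S t -> ip (f - s n) (f - s n) < ip (f - t) (f - t) + n.+1%:R^-1) ->
  hcauchy ip s.
Proof.
move=> hS hf Ss smin; have [SH _ _ _] := hS.
have hs n : H (s n) by exact: SH.
have dist_lt m n : ip (s m - s n) (s m - s n) < 2 * m.+1%:R^-1 + 2 * n.+1%:R^-1.
  pose mid := 2^-1 *: (s m + s n).
  have Smid : S mid by apply: closed_subspaceZ => //; exact: closed_subspaceD.
  have hmid := SH _ Smid.
  have := ip_parallelogram (hilbertB hH hf (hs n)) (hilbertB hH hf (hs m)).
  have -> : f - s n - (f - s m) = s m - s n by rewrite opprB addrC addrA subrK.
  have -> : f - s n + (f - s m) = 2 *: (f - mid).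
    rewrite scalerBr scalerA mulfV ?pnatr_eq0 // scale1r scaler_nat mulr2n.
    by rewrite addrACA -opprD (addrC (s n)).
  rewrite (ipZl hH) // ipZr //.
  have := smin n mid Smid; have := smin m mid Smid.
  (* lra does not accept the non-constant inverses, so abstract them *)
  by move: (m.+1%:R^-1) (n.+1%:R^-1) => em en; lra.
move=> eps eps_gt0.
have [N hN] := eventually_invS_lt (divr_gt0 (exprn_gt0 2 eps_gt0) (ltr0Sn _ 3)).
exists N => m n /hN hm /hN hn; rewrite hnorm_lt //.
apply: lt_trans (dist_lt m n) _.
by move: (m.+1%:R^-1) (n.+1%:R^-1) hm hn => em en; lra.
Qed.

Lemma orthogonal_projection S f : closed_subspace S -> H f ->
  exists2 p, S p & forall t, S t -> ip (f - p) t = 0.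
Proof.
move=> hS hf; have [SH _ _ Scl] := hS.
have [s Ss smin] := almost_minimizing_sequence hS hf.
have hs n : H (s n) by exact: SH.
have [p hp cvp] :=
  hilbert_complete hH hs (almost_minimizing_cauchy hS hf Ss smin).
exists p; first exact: Scl cvp.
move=> t St; have ht := SH _ St.
have c_gt0 : 0 < ip t t + 1 by have := ip_ge0 hH ht; lra.
have ip_small n : ip (f - s n) t ^+ 2 <= n.+1%:R^-1 * (ip t t + 1).
  apply: almost_minimizer_ip => // tau; apply/ltW.
  rewrite -addrA -opprD; apply: smin.
  by apply: closed_subspaceD => //; exact: closed_subspaceZ.
have ipE n : ip (f - p) t = ip (f - s n) t + ip (s n - p) t.
  by rewrite -(ipDl hH) // addrA subrK.
apply/eqP; rewrite -normr_le0; apply/ler_addgt0Pr => eps eps_gt0; rewrite add0r.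
have [N1 hN1] := eventually_invS_lt
  (divr_gt0 (exprn_gt0 2 (divr_gt0 eps_gt0 (ltr0Sn _ 1))) c_gt0).
have [N2 hN2] := cvp _
  (divr_gt0 (divr_gt0 eps_gt0 (ltr0Sn _ 1)) (ltr_pwDr ltr01 (hnorm_ge0 t))).
pose n := maxn N1 N2.
rewrite (ipE n) [eps]splitr; apply: le_trans (ler_normD _ _) _; apply: lerD.
- rewrite -(ler_pXn2r (_ : (0 < 2)%N)) ?nnegrE ?normr_ge0 ?divr_ge0 ?ltW //.
  rewrite real_normK ?num_real //; apply: le_lt_trans (ip_small n) _.
  by rewrite -ltr_pdivlMr // hN1 // leq_maxl.
- apply: le_trans (normr_ip_le (memB (hs n) hp) ht) _.
  apply: le_trans (_ : _ <= hnorm (s n - p) * (hnorm t + 1)) _.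
    by rewrite ler_wpM2l ?hnorm_ge0 // lerDl.
  by rewrite -ler_pdivlMr ?ltr_pwDr ?hnorm_ge0 // ltW // hN2 // leq_maxr.
Qed.

Lemma riesz_representation phi : bounded_linear phi ->
  exists2 r, H r & forall f, H f -> ip f r = phi f.
Proof.
move=> hphi; have [phi0|] := pselect (forall f, H f -> phi f = 0).
  by exists 0 => // f hf; rewrite ip0r // phi0.
move=> /existsNP[h /not_implyP[hh /eqP phih_neq0]].
have hK := closed_subspace_kernel (fun _ : unit => hphi).
have [p [hp pK] orth] := orthogonal_projection hK hh.
have hz : H (h - p) by [].
have phiz : phi (h - p) = phi h by rewrite bounded_linearB // (pK tt) subr0.
have zz_neq0 : ip (h - p) (h - p) != 0.
  apply: contra_neq phih_neq0 => /(ip_eq0 hH hz) z0.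
  by rewrite -phiz z0 bounded_linear0.
move: (h - p) hz phiz zz_neq0 orth => z hz phiz zz_neq0 orth.
exists ((phi z / ip z z) *: z) => // f hf.
have phiz_neq0 : phi z != 0 by rewrite phiz.
have wK : phi (f - (phi f / phi z) *: z) = 0.
  by rewrite bounded_linearB // bounded_linearZ // divfK // subrr.
have /eqP := orth _ (conj (memB hf (memZ (phi f / phi z) hz)) (fun=> wK)).
rewrite ipBr // ipZr // subr_eq0 => /eqP zf.
by rewrite ipZr // (ipC hH hf hz) zf; field; apply/andP.
Qed.

Lemma closed_subspace_rkhs S (kS : X -> X -> R) : closed_subspace S ->
  (forall x, S (kS^~ x)) -> (forall f x, S f -> ip f (kS^~ x) = f x) ->
  is_rkhs S ip kS.
Proof.
move=> hS kS_section kS_repr; have [SH S0 _ Scl] := hS.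
split => //.
- split=> //; split=> [f g Sf Sg | a f Sf].
    exact: closed_subspaceD.
  exact: closed_subspaceZ.
- split=> [f g /SH hf /SH hg|]; first exact: (ipC hH).
  split=> [f g h /SH hf /SH hg /SH hh|]; first exact: (ipDl hH).
  split=> [a f g /SH hf /SH hg|]; first exact: (ipZl hH).
  split=> [f /SH hf|f /SH hf]; [exact: (ip_ge0 hH) | exact: (ip_eq0 hH)].
- move=> u Su cau.
  have [f hf cvf] := hilbert_complete hH (fun n => SH _ (Su n)) cau.
  by exists f => //; exact: Scl cvf.
Qed.

Section ReproducingKernel.
Variable k : X -> X -> R.
Hypothesis k_section : forall x, H (k^~ x).
Hypothesis k_repr : forall f x, H f -> ip f (k^~ x) = f x.

Lemma rkhs_eval_le f x : H f -> `|f x| <= hnorm f * Num.sqrt (k x x).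
Proof.
move=> hf; have kxx : k x x = ip (k^~ x) (k^~ x) by rewrite k_repr.
by rewrite -(k_repr x hf) kxx; exact: normr_ip_le.
Qed.

Lemma bounded_linear_eval x : bounded_linear (fun f => f x).
Proof.
split=> [a f g _ _ //|]; exists (Num.sqrt (k x x)) => f hf.
by rewrite mulrC rkhs_eval_le.
Qed.

Lemma closed_subspace_sections S : closed_subspace S ->
  (forall x, S (k^~ x)) -> forall f, H f -> S f.
Proof.
move=> hS kS f hf; have [p Sp orth] := orthogonal_projection hS hf.
have hp : H p by case: hS => SH _ _ _; exact: SH.
suff -> : f = p by [].
apply/funext => x; apply/eqP; rewrite -subr_eq0; apply/eqP.
by rewrite -[LHS]/((f - p) x) -(k_repr x (memB hf hp)) orth.
Qed.

End ReproducingKernel.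
End Hilbert.

Lemma rkhs_measurable d (T : measurableType d) (R : realType) (H : set (T -> R))
    ip (k : T -> T -> R) :
  hilbert_space H ip -> (forall x, H (k^~ x)) ->
  (forall f x, H f -> ip f (k^~ x) = f x) ->
  (forall x, measurable_fun setT (k^~ x)) ->
  forall f, H f -> measurable_fun setT f.
Proof.
move=> hH k_section k_repr k_meas.
pose S := [set f | H f /\ measurable_fun setT f].
suff hS : closed_subspace H ip S.
  move=> f hf; have [_ //] := closed_subspace_sections hH k_repr hS
    (fun x => conj (k_section x) (k_meas x)) hf.
split.
- by move=> f [].
- by split; [exact: (hilbert0 hH) | exact: measurable_cst].
- move=> a f g [hf mf] [hg mg]; split.
    by apply: (hilbertD hH) => //; exact: (hilbertZ hH).
  by apply: measurable_funD => //; apply: measurable_funM.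
- move=> u f hu hf cv; split => //.
  apply: (measurable_fun_cvg (h := u)) => [n|x _]; first exact: (hu n).2.
  exact: bounded_linear_cvg (bounded_linear_eval hH k_section k_repr x)
    (fun n => (hu n).1) hf cv.
Qed.

Lemma continuous_measurable (T U : ptopologicalType) (f : T -> U) :
  continuous f -> measurable_fun [set: borelT T] (f : borelT T -> borelT U).
Proof.
move=> cf; apply: (@measurability _ _ (borelT T) (borelT U) _ _ (@open U)) => //.
move=> _ [A oA <-]; apply: sub_sigma_algebra; rewrite setTI.
by apply: open_comp => // x _; exact: cf.
Qed.

Lemma bounded_integrable d (T : measurableType d) (R : realType)
    (P : probability T R) (F : T -> R) :
  measurable_fun setT F -> (exists C, forall x, `|F x| <= C) ->
  P.-integrable setT (EFin \o F).
Proof.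
move=> mF [C hC]; apply: measurable_bounded_integrable => //.
  by apply: (le_lt_trans (probability_le1 _ measurableT)); rewrite ltry.
exists C; split; first exact: num_real.
by move=> M CM x _; apply: le_trans (hC x) (ltW CM).
Qed.

Lemma integral_probability_cst d (T : measurableType d) (R : realType)
    (P : probability T R) (c : \bar R) :
  (\int[P]_x c = c)%E.
Proof.
by rewrite integral_cst // -[RHS]mule1; congr (_ * _)%E; exact: probability_setT.
Qed.

Lemma Rintegral_probability_cst d (T : measurableType d) (R : realType)
    (P : probability T R) (r : R) :
  Rintegral P setT (fun=> r) = r.
Proof. by rewrite /Rintegral integral_probability_cst. Qed.

Section HaarProbability.
Variables (R : realType) (G : ptopologicalType) (mul : G -> G -> G)
  (inv : G -> G) (e : G) (lam : probability (borelT G) R).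
Hypothesis tg : topological_group mul inv e.
Hypothesis haar : haar_probability mul lam.

Lemma mulKVg a z : mul a (mul (inv a) z) = z.
Proof. by case: tg => mulA mul1 mulV _ _; rewrite mulA (mulV a).2 (mul1 z).1. Qed.

Lemma invg_uniq a b : mul a b = e -> b = inv a.
Proof.
case: tg => mulA mul1 mulV _ _ ab1.
by rewrite -(mul1 b).1 -(mulV a).1 -mulA ab1 (mul1 _).2.
Qed.

Lemma invMg a b : inv (mul a b) = mul (inv b) (inv a).
Proof.
case: tg => mulA mul1 mulV _ _; apply/esym/invg_uniq.
by rewrite -mulA (mulA b) (mulV b).2 (mul1 _).1 (mulV a).2.
Qed.

Lemma invgK a : inv (inv a) = a.
Proof. by case: tg => _ _ mulV _ _; apply/esym/invg_uniq; exact: (mulV a).1. Qed.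

Lemma measurable_mull a : measurable_fun setT (mul a : borelT G -> borelT G).
Proof.
case: tg => _ _ _ mul_cont _; apply: continuous_measurable => x.
apply: (@continuous_comp _ _ _ (pair a) (fun p : G * G => mul p.1 p.2)).
  by apply: cvg_pair; [exact: cvg_cst | exact: cvg_id].
exact: mul_cont.
Qed.

Lemma measurable_inv : measurable_fun setT (inv : borelT G -> borelT G).
Proof. by case: tg => _ _ _ _ inv_cont; exact: continuous_measurable. Qed.

Lemma haar_preimage a (A : set (borelT G)) : measurable A ->
  lam (mul a @^-1` A) = lam A.
Proof.
move=> mA; have mB : measurable (mul a @^-1` A : set (borelT G)).
  by rewrite -[X in measurable X]setTI; exact: measurable_mull.
rewrite -(haar a mB); congr (lam _); apply/seteqP; split => z.
  by case=> y hy <-.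
by move=> Az; exists (mul (inv a) z); rewrite /preimage /= mulKVg.
Qed.

Lemma haar_integral_mull (F : borelT G -> R) a : measurable_fun setT F ->
  (exists C, forall g, `|F g| <= C) ->
  (\int[lam]_g (F (mul a g))%:E = \int[lam]_g (F g)%:E)%E.
Proof.
move=> mF [C hC].
have := @integral_pushforward _ _ (borelT G) (borelT G) R (mul a)
  (measurable_mull a) lam setT (EFin \o F).
move=> /(_ _ _ measurableT); rewrite preimage_setT => <- //.
- apply: eq_measure_integral => [|ma A mA _]; first exact: measurable_mull.
  exact: haar_preimage.
- exact/measurable_EFinP.
- apply: bounded_integrable; first exact: measurableT_comp mF (measurable_mull a).
  by exists C.
Qed.

Section Orbits.
Variables (X : ptopologicalType) (act : G -> X -> X).
Hypothesis mact : measurable_action mul e act.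

Lemma measurable_orbit y :
  measurable_fun setT (fun g : borelT G => (act g y : borelT X)).
Proof.
case: mact => _ _ mA.
exact: (measurable_fun_pair1 (f := fun p : borelT G * borelT X =>
  (act p.1 p.2 : borelT X)) (y : borelT X) mA).
Qed.

(* Fubini for (g, g') |-> Phi (g'^-1 g y): by left invariance the inner integral
   in g' is the left side, and the inner integral in g is the right side. *)
Lemma haar_orbit_inv (Phi : borelT X -> R) y : measurable_fun setT Phi ->
  (exists C, forall z, `|Phi z| <= C) ->
  (\int[lam]_g (Phi (act (inv g) y))%:E = \int[lam]_g (Phi (act g y))%:E)%E.
Proof.
move=> mPhi [C hC]; case: mact => _ actM mA.
pose F (p : borelT G * borelT G) := Phi (act (inv p.2) (act p.1 y)).
have mPhi_inv : measurable_fun setT (fun g : borelT G => Phi (act (inv g) y)).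
  apply: measurableT_comp mPhi _.
  exact: measurableT_comp (measurable_orbit y) measurable_inv.
have mPhi_orbit : measurable_fun setT (fun g : borelT G => Phi (act g y)).
  exact: measurableT_comp mPhi (measurable_orbit y).
have intF : (lam \x lam)%E.-integrable setT (EFin \o F).
  apply: bounded_integrable; last by exists C => p; exact: hC.
  apply: (measurableT_comp mPhi).
  have mpair : measurable_fun setT (fun p : borelT G * borelT G =>
      ((inv p.2 : borelT G), (act p.1 y : borelT X))).
    apply: measurable_fun_pair.
      exact: measurableT_comp measurable_inv measurable_snd.
    exact: measurableT_comp (measurable_orbit y) measurable_fst.
  exact: measurableT_comp mA mpair.
have inner_inv g : (\int[lam]_g' (EFin \o F) (g, g') =
                    \int[lam]_g' (Phi (act (inv g') y))%:E)%E.
  transitivity (\int[lam]_g' (Phi (act (inv (mul (inv g) g')) y))%:E)%E.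
    by apply: eq_integral => g' _; rewrite /F /= invMg invgK -actM.
  apply: (haar_integral_mull (F := fun h => Phi (act (inv h) y))) => //.
  by exists C.
have inner_orbit g' : (\int[lam]_g (EFin \o F) (g, g') =
                       \int[lam]_g (Phi (act g y))%:E)%E.
  transitivity (\int[lam]_g (Phi (act (mul (inv g') g) y))%:E)%E.
    by apply: eq_integral => g _; rewrite /F /= actM.
  by apply: (haar_integral_mull (F := fun h => Phi (act h y))) => //; exists C.
have := Fubini intF.
rewrite (eq_integral (fun=> \int[lam]_g (Phi (act (inv g) y))%:E)%E); last first.
  by move=> g _; exact: inner_inv.
rewrite [in X in _ = X](eq_integral (fun=> \int[lam]_g (Phi (act g y))%:E)%E);
  last first.
  by move=> g' _; exact: inner_orbit.
by rewrite !integral_probability_cst.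
Qed.

Lemma haar_orbit_mulr (Phi : borelT X -> R) y h : measurable_fun setT Phi ->
  (exists C, forall z, `|Phi z| <= C) ->
  Rintegral lam setT (fun g => Phi (act g (act h y))) =
  Rintegral lam setT (fun g => Phi (act g y)).
Proof.
move=> mPhi bPhi; case: mact => _ actM _.
rewrite /Rintegral -(haar_orbit_inv (act h y) mPhi bPhi).
rewrite -(haar_orbit_inv y mPhi bPhi).
congr fine; transitivity (\int[lam]_g (Phi (act (inv (mul (inv h) g)) y))%:E)%E.
  by apply: eq_integral => g _; rewrite invMg invgK -actM.
apply: (haar_integral_mull (F := fun g => Phi (act (inv g) y))); last first.
  by case: bPhi => C hC; exists C.
exact: measurableT_comp mPhi (measurableT_comp (measurable_orbit y) measurable_inv).
Qed.

End Orbits.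
End HaarProbability.

Section Averaging.
Variables (R : realType) (G X : ptopologicalType) (mul : G -> G -> G)
  (inv : G -> G) (e : G) (lam : probability (borelT G) R) (act : G -> X -> X)
  (H : set (X -> R)) (ip : (X -> R) -> (X -> R) -> R) (k : X -> X -> R) (M : R).
Hypothesis tg : topological_group mul inv e.
Hypothesis haar : haar_probability mul lam.
Hypothesis mact : measurable_action mul e act.
Hypothesis hH : hilbert_space H ip.
Hypothesis k_section : forall x, H (k^~ x).
Hypothesis k_repr : forall f x, H f -> ip f (k^~ x) = f x.
Hypothesis k_sym : forall x y, k x y = k y x.
Hypothesis k_meas : forall x, measurable_fun setT (k^~ x : borelT X -> R).
Hypothesis k_diag_le : forall x, k x x <= M.
Hypothesis k_avg_sym : forall x x',
  Rintegral lam setT (fun g : borelT G => k (act g x) x') =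
  Rintegral lam setT (fun g : borelT G => k x (act g x')).

Let mem0 := hilbert0 hH.
Let memD := hilbertD hH.
Let memZ := hilbertZ hH.
Let memN := hilbertN hH.
Let memB := hilbertB hH.
Local Hint Resolve mem0 memD memZ memN memB : hilbert.
Local Hint Extern 0 (H _) => solve [auto with nocore hilbert] : core.

Local Notation O := (avg_op lam act).
Local Notation kbar := (kbar lam act k).
Local Notation Hbar := [set f | H f /\ G_invariant act f].
Local Notation Hperp := [set f | H f /\ O f = 0].

Lemma avg_op_invariant f : G_invariant act f -> O f = f.
Proof.
move=> f_inv; apply/funext => x.
rewrite /avg_op -[RHS](Rintegral_probability_cst lam).
by apply: eq_Rintegral => g _; exact: f_inv.
Qed.

Lemma rkhs_eval_le_bound f x : H f -> `|f x| <= Num.sqrt M * hnorm ip f.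
Proof.
move=> hf; rewrite mulrC; apply: le_trans (rkhs_eval_le hH k_section k_repr x hf) _.
by rewrite ler_wpM2l ?sqrtr_ge0 // ler_wsqrtr.
Qed.

Lemma orbit_integrable f y : H f ->
  lam.-integrable setT (EFin \o (fun g : borelT G => f (act g y))).
Proof.
move=> hf; apply: bounded_integrable; last first.
  by exists (Num.sqrt M * hnorm ip f) => g; exact: rkhs_eval_le_bound.
apply: measurableT_comp (measurable_orbit mact y).
exact: (rkhs_measurable (T := borelT X) hH k_section k_repr k_meas).
Qed.

Lemma bounded_linear_avg_op y : bounded_linear H ip (fun f => O f y).
Proof.
split=> [a f g hf hg|].
  rewrite /avg_op (RintegralD measurableT (orbit_integrable y (memZ a hf))
    (orbit_integrable y hg)).
  by rewrite (RintegralZl a measurableT (orbit_integrable y hf)).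
exists (Num.sqrt M) => f hf; rewrite /avg_op.
apply: le_trans (le_normr_Rintegral measurableT (orbit_integrable y hf)) _.
rewrite -[leRHS](Rintegral_probability_cst lam); apply: le_Rintegral => //.
- exact: integrable_norm (orbit_integrable y hf).
- by apply: bounded_integrable => //; exists (`|Num.sqrt M * hnorm ip f|).
- by move=> g _; exact: rkhs_eval_le_bound.
Qed.

Lemma kbar_riesz y :
  H (kbar^~ y) /\ forall f, H f -> ip f (kbar^~ y) = O f y.
Proof.
have [r hr r_repr] := riesz_representation hH (bounded_linear_avg_op y).
suff -> : kbar^~ y = r by [].
apply/funext => z; rewrite -(k_repr z hr) (ipC hH hr (k_section z)) r_repr //.
by apply: eq_Rintegral => g _; exact: k_sym.
Qed.

Lemma kbar_section y : H (kbar^~ y).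
Proof. exact: (kbar_riesz y).1. Qed.
Local Hint Resolve kbar_section : hilbert.

Lemma avg_op_ip f y : H f -> O f y = ip f (kbar^~ y).
Proof. by move=> hf; rewrite (kbar_riesz y).2. Qed.

Lemma kbar_sym x y : kbar x y = kbar y x.
Proof. by rewrite /kbar -k_avg_sym; apply: eq_Rintegral => g _; exact: k_sym. Qed.

Lemma kbar_invariant y : G_invariant act (kbar^~ y).
Proof.
move=> h z; rewrite kbar_sym [RHS]kbar_sym.
apply: (haar_orbit_mulr tg haar mact (Phi := k y)).
  by rewrite (_ : k y = k^~ y) //; apply/funext => x; exact: k_sym.
exists (Num.sqrt M * hnorm ip (k^~ y)) => x.
by rewrite k_sym; exact: rkhs_eval_le_bound.
Qed.

Lemma avg_op_section x : O (k^~ x) = kbar^~ x.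
Proof.
apply/funext => z; rewrite kbar_sym.
by apply: eq_Rintegral => g _; exact: k_sym.
Qed.

Lemma avg_opB f g : H f -> H g -> O (f - g) = O f - O g.
Proof.
move=> hf hg; apply/funext => y.
exact: bounded_linearB (bounded_linear_avg_op y) hf hg.
Qed.

Lemma closed_subspace_invariant : closed_subspace H ip Hbar.
Proof.
have -> : Hbar = [set f | H f /\ forall p : G * X, f (act p.1 p.2) - f p.2 = 0].
  apply/seteqP; split=> f [hf f_inv]; split=> //.
    by case=> g x /=; rewrite f_inv subrr.
  by move=> g x; apply/eqP; rewrite -subr_eq0; exact/eqP/(f_inv (g, x)).
apply: (closed_subspace_kernel hH) => -[g x].
exact: bounded_linear_sub (bounded_linear_eval hH k_section k_repr (act g x))
  (bounded_linear_eval hH k_section k_repr x).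
Qed.

Lemma closed_subspace_perp : closed_subspace H ip Hperp.
Proof.
have -> : Hperp = [set f | H f /\ forall y, O f y = 0].
  apply/seteqP; split=> f [hf Of]; split=> //; first by move=> y; rewrite Of.
  exact/funext.
apply: (closed_subspace_kernel hH); exact: bounded_linear_avg_op.
Qed.

Lemma avg_op_projection f : H f ->
  Hbar (O f) /\ forall s, Hbar s -> ip (f - O f) s = 0.
Proof.
move=> hf.
have [p p_inv orth] := orthogonal_projection hH closed_subspace_invariant hf.
suff -> : O f = p by [].
have [hp _] := p_inv.
apply/funext => y; rewrite -[in RHS](avg_op_invariant p_inv.2) !avg_op_ip //.
apply/eqP; rewrite -subr_eq0 -(ipBl hH hf hp (kbar_section y)).
apply/eqP; apply: orth.
by split; [exact: kbar_section | exact: kbar_invariant].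
Qed.

Lemma avg_op_orthogonal_decomposition :
  [/\ (forall f, H f -> H (O f)),
      (forall f, H f -> exists f1 f2, [/\ Hbar f1, Hperp f2 & f = f1 + f2]) /\
      (forall f1 f2, Hbar f1 -> Hperp f2 -> ip f1 f2 = 0),
      is_rkhs Hbar ip kbar &
      is_rkhs Hperp ip (fun x y => k x y - kbar x y)].
Proof.
have Hperp_sub f : H f -> Hperp (f - O f).
  move=> hf; have [[hOf Of_inv] _] := avg_op_projection hf.
  by split=> //; rewrite avg_opB // (avg_op_invariant Of_inv) subrr.
split.
- by move=> f /avg_op_projection[[]].
- split=> [f hf|f1 f2 hf1 [hf2 Of2]].
    exists (O f), (f - O f); split; last by rewrite addrC subrK.
      exact: (avg_op_projection hf).1.
    exact: Hperp_sub.
  have [_ orth] := avg_op_projection hf2.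
  by rewrite (ipC hH hf1.1 hf2) -(orth _ hf1) Of2 subr0.
- apply: (closed_subspace_rkhs hH closed_subspace_invariant) => [x|f x [hf f_inv]].
    by split; [exact: kbar_section | exact: kbar_invariant].
  by rewrite -avg_op_ip // avg_op_invariant.
- apply: (closed_subspace_rkhs hH closed_subspace_perp) => [x|f x [hf Of]].
    split; first exact: memB (k_section x) (kbar_section x).
    by rewrite avg_opB // avg_op_section (avg_op_invariant (kbar_invariant x)) subrr.
  have -> : (fun y => k y x - kbar y x) = k^~ x - kbar^~ x by [].
  by rewrite (ipBr hH) // k_repr // -avg_op_ip // Of subr0.
Qed.

End Averaging.

Unset Implicit Arguments.
Set Strict Implicit.

Theorem theorem5p14 (R : realType) (G X : ptopologicalType)
  (mul : G -> G -> G) (inv : G -> G) (e : G)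
  (lam : probability (borelT G) R) (act : G -> X -> X)
  (mu : probability (borelT X) R) (k : X -> X -> R)
  (H : set (X -> R)) (ip : (X -> R) -> (X -> R) -> R) :
  (* G: compact, second countable, Hausdorff topological group with Haar
     probability measure lam *)
  topological_group mul inv e ->
  compact [set: G] -> @second_countable G -> hausdorff_space G ->
  haar_probability mul lam ->
  (* X: nonempty Polish space with a measurable G-action *)
  polish R X ->
  measurable_action mul e act ->
  (* mu: G-invariant Borel probability measure with full support *)
  (forall (g : G) (A : set (borelT X)), measurable A ->
     mu (act g @^-1` A) = mu A) ->
  msupport mu = [set: X] ->
  (* k: measurable symmetric positive definite kernel with RKHS (H, ip) *)
  pd_kernel k ->
  measurable_fun [set: (borelT X * borelT X)%type]
    (fun p : (borelT X * borelT X)%type => k p.1 p.2) ->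
  (forall x : X, continuous (fun y : X => k y x)) ->
  (exists M : R, forall x, k x x <= M) ->
  is_rkhs H ip k ->
  (* the symmetry assumption on k *)
  (forall x x' : X,
     Rintegral lam [set: borelT G] (fun g : borelT G => k (act g x) x') =
     Rintegral lam [set: borelT G] (fun g : borelT G => k x (act g x'))) ->
  let O := avg_op lam act in
  let Hbar := [set f | H f /\ G_invariant act f] in
  let Hperp := [set f | H f /\ O f = (fun _ => 0)] in
  [/\ (forall f, H f -> H (O f)),
      (* orthogonal decomposition H = Hbar (+) Hperp *)
      (forall f, H f -> exists f1 f2,
          [/\ Hbar f1, Hperp f2 & f = (fun x => f1 x + f2 x)]) /\
      (forall f1 f2, Hbar f1 -> Hperp f2 -> ip f1 f2 = 0),
      is_rkhs Hbar ip (kbar lam act k) &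
      is_rkhs Hperp ip (fun x y => k x y - kbar lam act k x y)].
Proof.
move=> tg _ _ _ haar _ mact _ _ [k_sym _] k_meas _ [M k_diag_le] hk k_avg_sym.
have [_ _ _ k_section k_repr] := hk.
have k_meas_section x : measurable_fun setT (k^~ x : borelT X -> R).
  exact: (measurable_fun_pair1 (f := fun p : borelT X * borelT X => k p.1 p.2)
    (x : borelT X) k_meas).
exact: (avg_op_orthogonal_decomposition tg haar mact (rkhs_hilbert_space hk)
  k_section k_repr k_sym k_meas_section k_diag_le k_avg_sym).
Qed.
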